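(* Let $W_1,W_2,\dots$ be graphons on $\Omega$ with $\|W_n-W\|_\square\to0$ for a graphon $W$. Let $A_n,B_n\subseteq\Omega$ be measurable sets with $\int_{A_n\times B_n}W_n\,d\mu^2=0$ for every $n$, and suppose that $\mathbf{1}_{A_n}$ converges weak* to $a\in L^\infty(\Omega)$ and $\mathbf{1}_{B_n}$ converges weak* to $b\in L^\infty(\Omega)$. Then $\int_{\mathrm{supp}(a)\times\mathrm{supp}(b)}W\,d\mu^2=0$.
   Context: $(\Omega,\mu)$ is an atomless standard probability space; a graphon is a symmetric measurable $W:\Omega^2\to[0,1]$. The cut norm is $\|U\|_\square=\sup_{S,T\subseteq\Omega}\left|\int_{S\times T}U\,d\mu^2\right|$. A sequence $g_n\in L^\infty(\Omega)$ converges weak* to $g$ if $\int_X g_n\,d\mu\to\int_X g\,d\mu$ for every measurable $X\subseteq\Omega$. For a measurable function $g$, $\mathrm{supp}(g)=\{x:g(x)\neq0\}$. *)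

From HB Require Import structures.
From mathcomp Require Import all_boot all_order all_algebra.
From mathcomp Require Import all_classical all_reals all_analysis.
Set Implicit Arguments. Unset Strict Implicit. Unset Printing Implicit Defensive.
Import Order.TTheory GRing.Theory Num.Theory.
Local Open Scope classical_set_scope.
Local Open Scope ring_scope.

Section defs.
Context (d : measure_display) (T : measurableType d) (R : realType)
        (P : probability T R).

Definition atomless : Prop :=
  forall A : set T, measurable A -> (0 < P A)%E ->
    exists B : set T, [/\ measurable B, B `<=` A, (0 < P B)%E & (P B < P A)%E].

Definition graphon (W : T * T -> R) : Prop :=
  [/\ measurable_fun setT W,
      (forall x y, W (x, y) = W (y, x)) &
      (forall z, 0 <= W z <= 1)].

Definition cut_norm (U : T * T -> R) : \bar R :=
  ereal_sup [set r : \bar R | exists S S' : set T,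
    [/\ measurable S, measurable S' &
        r = (`| \int[(P \x P)%E]_(z in S `*` S') (U z)%:E |)%E]].

Definition Linfty (g : T -> R) : Prop :=
  measurable_fun setT g /\ exists M : R, {ae P, forall x, `|g x| <= M}.

Definition weakstar_cvg (g : nat -> T -> R) (h : T -> R) : Prop :=
  forall X : set T, measurable X ->
    (fun n => \int[P]_(x in X) (g n x)%:E)%E @ \oo
      --> (\int[P]_(x in X) (h x)%:E)%E.

Definition supp (g : T -> R) : set T := [set x | g x != 0].

End defs.

From HB Require Import structures.
From mathcomp Require Import all_boot all_order all_algebra.
From mathcomp Require Import all_classical all_reals all_analysis.
From mathcomp Require Import measurable_realfun.
Import Order.TTheory GRing.Theory Num.Theory.
Import numFieldNormedType.Exports.
Local Open Scope classical_set_scope.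
Local Open Scope ring_scope.
Set Implicit Arguments. Unset Strict Implicit.

(* Weak* convergence of the indicators gives convergence of
   [\int_E 1_{A_n}(x) 1_{B_n}(y)] to [\int_E a(x) b(y)], first on rectangles and
   then, by a Dynkin argument with dominated convergence, on every measurable
   [E].  If [W > r] on [E], the former integral is at most
   [r^-1 \int_{A_n x B_n} W = r^-1 |\int_{A_n x B_n} (W_n - W)|
    <= r^-1 ||W_n - W||_cut -> 0].
   Hence [a(x) b(y) = 0] almost everywhere on [{W > r}] for every [r > 0], so
   [W] vanishes almost everywhere on [supp a x supp b]. *)

Section tensor_integral.
Context d (T : measurableType d) (R : realType) (P : probability T R).
Local Notation mu := (P \x P)%E.
Local Open Scope ereal_scope.

Definition tensor_integral (f g : T -> R) (E : set (T * T)) :=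
  \int[mu]_(z in E) (f z.1 * g z.2)%:E.

Lemma measurable_tensor (f g : T -> R) : measurable_fun setT f ->
  measurable_fun setT g -> measurable_fun setT (fun z : T * T => f z.1 * g z.2)%R.
Proof.
move=> mf mg; apply: measurable_funM.
  exact: measurableT_comp mf measurable_fst.
exact: measurableT_comp mg measurable_snd.
Qed.

Lemma integrable_tensor (f g : T -> R) : P.-integrable setT (EFin \o f) ->
  P.-integrable setT (EFin \o g) ->
  mu.-integrable setT (fun z => (f z.1 * g z.2)%:E).
Proof.
move=> intf intg.
have mf : measurable_fun setT f by apply/measurable_EFinP; exact: measurable_int intf.
have mg : measurable_fun setT g by apply/measurable_EFinP; exact: measurable_int intg.
have mfg := measurable_tensor mf mg.
apply/integrable12ltyP => //; first exact/measurable_EFinP.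
under eq_integral => x _.
  under eq_integral => y _ do rewrite /= normrM EFinM.
  rewrite ge0_integralZl_EFin//=; last exact: measurableT_comp (measurableT_comp _ mg).
  over.
rewrite /= ge0_integralZr//=; last 2 first.
- exact: measurableT_comp (measurableT_comp _ mf).
- exact: integral_ge0.
apply: lte_mul_pinfty; first exact: integral_ge0.
  by rewrite ge0_fin_numE ?(integrableP _ _ _ intf).2//; exact: integral_ge0.
exact: (integrableP _ _ _ intg).2.
Qed.

Lemma integral_tensor (f g : T -> R) : P.-integrable setT (EFin \o f) ->
  P.-integrable setT (EFin \o g) ->
  \int[mu]_z (f z.1 * g z.2)%:E = (\int[P]_x (f x)%:E) * (\int[P]_x (g x)%:E).
Proof.
move=> intf intg.
rewrite -(integral12_prod_meas1 (integrable_tensor intf intg)) /fubini_F /=.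
under eq_integral => x _.
  under eq_integral => y _ do rewrite EFinM.
  rewrite integralZl//.
  over.
by rewrite /= -(fineK (integrable_fin_num measurableT intg)) integralZr.
Qed.

Lemma integrable_patch (f : T -> R) S : measurable S ->
  P.-integrable setT (EFin \o f) -> P.-integrable setT (EFin \o (f \_ S)).
Proof.
move=> mS intf; rewrite -restrict_EFin; apply/(integrable_mkcond _ mS).
exact: integrableS intf.
Qed.

Lemma tensor_integral_setX (f g : T -> R) S S' : measurable S -> measurable S' ->
  P.-integrable setT (EFin \o f) -> P.-integrable setT (EFin \o g) ->
  tensor_integral f g (S `*` S') =
    (\int[P]_(x in S) (f x)%:E) * (\int[P]_(x in S') (g x)%:E).
Proof.
move=> mS mS' intf intg; rewrite /tensor_integral integral_mkcond.
have -> : (fun z : T * T => (f z.1 * g z.2)%:E) \_ (S `*` S') =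
    fun z => ((f \_ S) z.1 * (g \_ S') z.2)%:E.
  apply/funext => -[x y]; rewrite /patch /= in_setX /=.
  by case: (x \in S); case: (y \in S') => /=; rewrite ?mul0r ?mulr0.
rewrite integral_tensor ?integrable_patch//.
by rewrite [in RHS]integral_mkcond [X in _ = _ * X]integral_mkcond !restrict_EFin.
Qed.

Lemma prod_probability_setT : mu setT = 1.
Proof.
rewrite -setXTT product_measure1E// -[1]mule1.
by congr (_ * _); exact: probability_setT.
Qed.

Lemma prod_probability_lty E : measurable E -> mu E < +oo.
Proof.
move=> mE; apply: (@le_lt_trans _ _ (mu setT)).
  by apply: le_measure; rewrite ?inE.
by rewrite prod_probability_setT ltry.
Qed.

Lemma integrable_tensorS f g E : measurable E ->
  P.-integrable setT (EFin \o f) -> P.-integrable setT (EFin \o g) ->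
  mu.-integrable E (fun z => (f z.1 * g z.2)%:E).
Proof. by move=> mE intf intg; exact: integrableS (integrable_tensor intf intg). Qed.

Lemma tensor_integral_fin_num f g E : measurable E ->
  P.-integrable setT (EFin \o f) -> P.-integrable setT (EFin \o g) ->
  tensor_integral f g E \is a fin_num.
Proof.
by move=> mE intf intg; exact: integrable_fin_num (integrable_tensorS mE intf intg).
Qed.

Lemma tensor_integralC f g S : measurable S ->
  P.-integrable setT (EFin \o f) -> P.-integrable setT (EFin \o g) ->
  tensor_integral f g (~` S) = tensor_integral f g setT - tensor_integral f g S.
Proof.
move=> mS intf intg; have Sfin := tensor_integral_fin_num mS intf intg.
rewrite /tensor_integral in Sfin *.
have := @integral_setU _ _ _ mu S (~` S) (fun z => (f z.1 * g z.2)%:E) mS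
  (measurableC mS).
rewrite setUv => ->.
- by rewrite addeAC subee// add0e.
- exact: measurable_int (integrable_tensor intf intg).
- exact/disj_setPCl.
Qed.

Lemma abse_tensor_integral_le (f g : T -> R) E : measurable E ->
  measurable_fun setT f -> measurable_fun setT g ->
  (forall x, `|f x| <= 1)%R -> (forall x, `|g x| <= 1)%R ->
  `|tensor_integral f g E| <= mu E.
Proof.
move=> mE mf mg f1 g1.
have mF : measurable_fun E (fun z : T * T => (f z.1 * g z.2)%:E).
  apply/measurable_EFinP; apply: (measurable_funS measurableT (@subsetT _ _)).
  exact: measurable_tensor.
apply: (le_trans (le_abse_integral _ mE mF)).
rewrite -[mu E]mul1e -integral_cst//; apply: ge0_le_integral => //.
- exact: measurableT_comp mF.
- by move=> z _; rewrite /= lee_fin normrM mulr_ile1.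
Qed.

End tensor_integral.

Section tensor_integral_cvg.
Context d (T : measurableType d) (R : realType) (P : probability T R).
Local Notation mu := (P \x P)%E.
Local Notation tensor_integral := (tensor_integral P).
Local Open Scope ereal_scope.

Lemma tensor_integral_bigcup f g (F : nat -> set (T * T)) :
  (forall k, measurable (F k)) -> trivIset setT F ->
  P.-integrable setT (EFin \o f) -> P.-integrable setT (EFin \o g) ->
  tensor_integral f g (\bigcup_k F k) =
    \int[counting]_k tensor_integral f g (F k).
Proof.
move=> mF tF intf intg.
have intU := integrable_tensorS (bigcupT_measurable F mF) intf intg.
rewrite integral_count; last exact: integrable_summable tF mF intU.
exact: integral_bigcup tF mF intU.
Qed.

Variables (fn gn : nat -> T -> R) (f g : T -> R).
Hypotheses (intfn : forall n, P.-integrable setT (EFin \o fn n))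
  (intgn : forall n, P.-integrable setT (EFin \o gn n))
  (intf : P.-integrable setT (EFin \o f)) (intg : P.-integrable setT (EFin \o g))
  (fn1 : forall n x, (`|fn n x| <= 1)%R) (gn1 : forall n x, (`|gn n x| <= 1)%R).

Let mfn n : measurable_fun setT (fn n).
Proof. by apply/measurable_EFinP; exact: measurable_int (intfn n). Qed.

Let mgn n : measurable_fun setT (gn n).
Proof. by apply/measurable_EFinP; exact: measurable_int (intgn n). Qed.

Lemma tensor_integral_cvg_bigcup (F : nat -> set (T * T)) :
  (forall k, measurable (F k)) -> trivIset setT F ->
  (forall k, tensor_integral (fn n) (gn n) (F k) @[n --> \oo] -->
     tensor_integral f g (F k)) ->
  tensor_integral (fn n) (gn n) (\bigcup_k F k) @[n --> \oo] -->
    tensor_integral f g (\bigcup_k F k).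
Proof.
move=> mF tF cvgF.
rewrite tensor_integral_bigcup//.
under eq_fun do rewrite tensor_integral_bigcup//.
have cvg_ae : \forall k \ae (@counting nat R), setT k ->
    tensor_integral (fn n) (gn n) (F k) @[n --> \oo] --> tensor_integral f g (F k).
  by apply: aeW => k _; exact: cvgF.
have int_mu : (@counting nat R).-integrable setT (fun k => mu (F k)).
  apply/integrableP; split => //.
  under eq_integral do rewrite gee0_abs//.
  rewrite ge0_integral_count// [X in X < _](_ : _ = mu (\bigcup_k F k)).
    exact: prod_probability_lty (bigcupT_measurable F mF).
  by rewrite measure_bigcup//; apply: eq_eseriesl => k; rewrite in_setT.
have dom : \forall k \ae (@counting nat R), forall n, setT k ->
    `|tensor_integral (fn n) (gn n) (F k)| <= mu (F k).
  by apply: aeW => k n _; exact: abse_tensor_integral_le.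
by have [_ _] := @dominated_convergence _ _ R (@counting nat R) setT measurableT
  (fun n k => tensor_integral (fn n) (gn n) (F k)) (fun k => tensor_integral f g (F k))
  (fun k => mu (F k)) (fun n => ltac:(by [])) ltac:(by []) cvg_ae int_mu dom.
Qed.

Lemma tensor_integral_cvg :
  (forall S S', measurable S -> measurable S' ->
     tensor_integral (fn n) (gn n) (S `*` S') @[n --> \oo] -->
       tensor_integral f g (S `*` S')) ->
  forall E, measurable E ->
    tensor_integral (fn n) (gn n) E @[n --> \oo] --> tensor_integral f g E.
Proof.
move=> cvg_rect E mE.
pose G := [set A `*` B | A in @measurable _ T & B in @measurable _ T].
apply: (@dynkin_induction _ _ G
  (fun E => tensor_integral (fn n) (gn n) E @[n --> \oo] --> tensor_integral f g E)
  _ _ _ _ _ _ E).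
- exact: measurable_prod_measurableType.
- move=> _ _ [A mA [B mB <-]] [C mC [D mD <-]]; rewrite -setXI.
  by exists (A `&` C); [exact: measurableI|exists (B `&` D) => //; exact: measurableI].
- by rewrite -setXTT; exact: cvg_rect.
- by move=> _ [A mA [B mB <-]]; exact: cvg_rect.
- move=> S mS cvgS.
  rewrite tensor_integralC//; under eq_fun do rewrite tensor_integralC//.
  apply: cvgeB => //.
  + by rewrite fin_num_adde_defl// fin_numN tensor_integral_fin_num.
  + by rewrite -setXTT; exact: cvg_rect.
- by move=> F mF tF; exact: tensor_integral_cvg_bigcup.
- by rewrite -measurable_prod_measurableType.
Qed.

End tensor_integral_cvg.

Section measurable_level_sets.
Context d (T : measurableType d) (R : realType).

Lemma measurable_superlevel (h : T -> R) r : measurable_fun setT h ->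
  measurable [set x | r < h x].
Proof.
move=> mh; have -> : [set x | r < h x] = h @^-1` `]r, +oo[%classic.
  by apply/seteqP; split => x /=; rewrite in_itv/= andbT.
by rewrite -[X in measurable X]setTI; exact: mh.
Qed.

Lemma measurable_supp (h : T -> R) : measurable_fun setT h -> measurable (supp h).
Proof.
move=> mh; have -> : supp h = h @^-1` (~` [set 0]).
  by apply/seteqP; split => x /= /eqP.
by rewrite -[X in measurable X]setTI; apply: mh => //; exact: measurableC.
Qed.

End measurable_level_sets.

Section graphon_bounds.
Context d (T : measurableType d) (R : realType) (P : probability T R).
Local Notation mu := (P \x P)%E.
Local Open Scope ereal_scope.

Lemma Linfty_integrable (a : T -> R) : Linfty P a -> P.-integrable setT (EFin \o a).
Proof.
move=> [ma [M boundM]]; apply/integrableP; split; first exact/measurable_EFinP.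
apply: (@le_lt_trans _ _ (`|M|%:E * P setT)).
  apply: integral_le_bound => //; first exact/measurable_EFinP.
  by apply: filterS boundM => x xM _ /=; rewrite lee_fin (le_trans xM (ler_norm _)).
by rewrite probability_setT mule1 ltry.
Qed.

Lemma graphon_integrable (U : T * T -> R) E : graphon U -> measurable E ->
  mu.-integrable E (EFin \o U).
Proof.
move=> [mU _ U01] mE; apply: measurable_bounded_integrable => //.
- exact: prod_probability_lty.
- exact: measurable_funS mU.
- exists 1%R; split => // r r1 z _ /=; have /andP[z0 z1] := U01 z.
  by rewrite ger0_norm// (le_trans z1 (ltW r1)).
Qed.

Lemma integral_setX_le_cut_norm (V U : T * T -> R) A B :
  graphon V -> graphon U -> measurable A -> measurable B ->
  \int[mu]_(z in A `*` B) (V z)%:E = 0 ->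
  \int[mu]_(z in A `*` B) (U z)%:E <= cut_norm P (V \- U)%R.
Proof.
move=> gV gU mA mB V0; have mAB := measurableX mA mB.
have U0 z : (0 <= U z)%R by case: gU => _ _ /(_ z) /andP[].
have -> : \int[mu]_(z in A `*` B) (U z)%:E =
    `| \int[mu]_(z in A `*` B) ((V \- U)%R z)%:E |.
  rewrite [X in `|X|](eq_integral (fun z => (V z)%:E - (U z)%:E)); last first.
    by move=> z _; rewrite /= EFinB.
  rewrite integralB_EFin ?graphon_integrable// V0 sub0e abseN gee0_abs//.
  by apply: integral_ge0 => z _; rewrite lee_fin.
by apply: ereal_sup_ubound; exists A, B.
Qed.

Lemma tensor_integral_indic_le (U : T * T -> R) (A B : set T) E (r : R) :
  measurable_fun setT U -> (forall z, 0 <= U z)%R ->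
  measurable A -> measurable B -> measurable E -> (0 < r)%R ->
  E `<=` [set z | (r < U z)%R] ->
  tensor_integral P \1_A \1_B E <= r^-1%:E * \int[mu]_(z in A `*` B) (U z)%:E.
Proof.
move=> mU U0 mA mB mE r0 EU.
have mAB := measurableX mA mB; have mEAB := measurableI _ _ mE mAB.
have mUE : measurable_fun (E `&` (A `*` B)) U.
  exact: measurable_funS measurableT (@subsetT _ _) mU.
have -> : tensor_integral P \1_A \1_B E = mu (A `*` B `&` E).
  rewrite /tensor_integral -integral_indic//; apply: eq_integral => -[x y] _.
  by rewrite /= !indicE in_setX -natrM mulnb.
rewrite setIC -[mu _]mul1e -integral_cst//.
apply: (@le_trans _ _ (\int[mu]_(z in E `&` (A `*` B)) (r^-1 * U z)%:E)).
  apply: ge0_le_integral => //.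
  - by apply/measurable_EFinP; exact: measurable_funM (measurable_cst _) mUE.
  - by move=> z [/EU/= rU _]; rewrite lee_fin ler_pdivlMl// mulr1 ltW.
under eq_integral do rewrite EFinM.
rewrite ge0_integralZl_EFin ?invr_ge0 ?(ltW r0)//; last 2 first.
- by move=> z _; rewrite lee_fin.
- exact/measurable_EFinP.
rewrite lee_wpmul2l ?lee_fin ?invr_ge0 ?(ltW r0)// ge0_subset_integral//.
- by apply/measurable_EFinP; exact: measurable_funS mU.
- by move=> z _; rewrite lee_fin.
Qed.

End graphon_bounds.

Section weakstar_limit.
Context d (T : measurableType d) (R : realType) (P : probability T R).
Local Notation mu := (P \x P)%E.
Local Open Scope ereal_scope.

Variables (Wn : nat -> T * T -> R) (W : T * T -> R) (A B : nat -> set T) (a b : T -> R).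
Hypotheses (gWn : forall n, graphon (Wn n)) (gW : graphon W)
  (cvg_cut : (fun n => cut_norm P (Wn n \- W)%R) @ \oo --> 0)
  (mA : forall n, measurable (A n)) (mB : forall n, measurable (B n))
  (WnAB0 : forall n, \int[mu]_(z in A n `*` B n) (Wn n z)%:E = 0)
  (ha : Linfty P a) (hb : Linfty P b)
  (cvgA : weakstar_cvg P (fun n => \1_(A n)) a)
  (cvgB : weakstar_cvg P (fun n => \1_(B n)) b).

Let inta := Linfty_integrable ha.
Let intb := Linfty_integrable hb.

Lemma tensor_integral_indic_cvg E : measurable E ->
  tensor_integral P \1_(A n) \1_(B n) E @[n --> \oo] --> tensor_integral P a b E.
Proof.
have normr_indic (X : set T) x : (`|\1_X x| <= 1 :> R)%R.
  by rewrite indicE; case: (_ \in _); rewrite ?normr0 ?normr1.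
apply: tensor_integral_cvg => // [n|n|S S' mS mS'];
  [exact: integrable_indic|exact: integrable_indic|].
rewrite tensor_integral_setX//.
under eq_fun do rewrite tensor_integral_setX ?integrable_indic//.
have fin_int f X : measurable X -> P.-integrable setT (EFin \o f) ->
    \int[P]_(x in X) (f x)%:E \is a fin_num.
  by move=> mX intf; exact: integrable_fin_num (integrableS _ _ _ intf).
apply: cvgeM; [by apply: mule_def_fin; exact: fin_int|exact: cvgA|exact: cvgB].
Qed.

Lemma tensor_integral_superlevel_eq0 (r : R) E : (0 < r)%R -> measurable E ->
  E `<=` [set z | (r < W z)%R] -> tensor_integral P a b E = 0.
Proof.
move=> r0 mE EW; case: (gW) => mW _ W01.
have W0 z : (0 <= W z)%R by case/andP: (W01 z).
suff cvg0 : tensor_integral P \1_(A n) \1_(B n) E @[n --> \oo] --> 0.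
  exact: cvg_unique (tensor_integral_indic_cvg mE) cvg0.
apply: (@squeeze_cvge _ _ _ _ (cst 0) _
  (fun n => r^-1%:E * cut_norm P (Wn n \- W)%R)).
- apply: nearW => n; apply/andP; split.
    by apply: integral_ge0 => z _; rewrite lee_fin mulr_ge0.
  apply: (le_trans (tensor_integral_indic_le P mW W0 (mA n) (mB n) mE r0 EW)).
  apply: lee_wpmul2l; first by rewrite lee_fin invr_ge0 ltW.
  exact: integral_setX_le_cut_norm (gWn n) gW (mA n) (mB n) (WnAB0 n).
- exact: cvg_cst.
- by rewrite -(mule0 r^-1%:E); exact: cvgeZl.
Qed.

Lemma tensor_superlevel_ae_eq0 (r : R) : (0 < r)%R ->
  (fun z => (a z.1 * b z.2)%:E) = cst 0 %[ae mu in [set z | (r < W z)%R]].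
Proof.
move=> r0; have [mW _ _] := gW; have mWr := measurable_superlevel r mW.
apply: integral_ae_eq => //.
- exact: integrable_tensorS.
- move=> E EW mE; rewrite integral0.
  exact: tensor_integral_superlevel_eq0 EW.
Qed.

End weakstar_limit.

Unset Implicit Arguments.

Theorem claim4p3 (d : measure_display) (T : measurableType d) (R : realType)
  (P : probability T R) (hP : atomless P)
  (Wn : nat -> T * T -> R) (W : T * T -> R)
  (hWn : forall n, graphon (Wn n)) (hW : graphon W)
  (hcut : (fun n => cut_norm P (Wn n \- W)) @ \oo --> 0%E)
  (A B : nat -> set T) (mA : forall n, measurable (A n))
  (mB : forall n, measurable (B n))
  (h0 : forall n, (\int[(P \x P)%E]_(z in A n `*` B n) (Wn n z)%:E)%E = 0%E)
  (a b : T -> R) (ha : Linfty P a) (hb : Linfty P b)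
  (hAa : weakstar_cvg P (fun n => \1_(A n)) a)
  (hBb : weakstar_cvg P (fun n => \1_(B n)) b) :
  (\int[(P \x P)%E]_(z in supp a `*` supp b) (W z)%:E)%E = 0%E.
Proof.
have [mW _ W01] := hW.
have mD : measurable (supp a `*` supp b).
  by apply: measurableX; apply: measurable_supp; [exact: ha.1|exact: hb.1].
have ab0 : \forall z \ae (P \x P)%E, forall k,
    (k.+1%:R^-1 < W z)%R -> (a z.1 * b z.2)%:E = 0%E.
  apply: ae_foralln => k; have k0 : (0 < k.+1%:R^-1 :> R)%R by rewrite invr_gt0.
  exact: tensor_superlevel_ae_eq0 hWn hW hcut mA mB h0 ha hb hAa hBb _ k0.
rewrite (ae_eq_integral (cst 0%E)) ?integral0//.
- by apply/measurable_EFinP; exact: measurable_funS mW.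
- apply: filterS ab0 => z abz [/= az bz]; apply/eqP; rewrite eqe.
  have /andP[W0 _] := W01 z; rewrite eq_le W0 andbT leNgt; apply/negP => Wpos.
  have [k] := ltr_add_invr Wpos; rewrite add0r => /abz/eqP.
  by rewrite eqe mulf_eq0 (negbTE az) (negbTE bz).
Qed.
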